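(* Let $0<p<1$. Every Schur $\mathcal{C}_p$-bounded pattern is a subset of a set of the form $(F\times\mathbb{N})\cup(\mathbb{N}\times F)$ for some finite $F\subseteq\mathbb{N}$.
   Context: $\mathcal{C}_p$ is the Schatten ideal of compact operators $A$ on $\ell_2(\mathbb{N})$ with $\|A\|_{\mathcal{C}_p}=(\sum_{k\ge0}\mu(k,A)^p)^{1/p}<\infty$, where $\mu(k,A)=\inf\{\|A-R\|_\infty:\mathrm{rank}(R)\le k\}$. For $m\in\ell_\infty(\mathbb{N}^2)$, $T_m(\{A_{j,k}\})=\{m(j,k)A_{j,k}\}$; $m$ is a bounded Schur multiplier of $\mathcal{C}_p$ if $\|T_m(A)\|_{\mathcal{C}_p}\le C_m\|A\|_{\mathcal{C}_p}$ for all finitely supported matrices $A$; $S\subseteq\mathbb{N}^2$ is a Schur $\mathcal{C}_p$-bounded pattern if every $m\in\ell_\infty(\mathbb{N}^2)$ supported on $S$ is a bounded Schur multiplier of $\mathcal{C}_p$. *)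

From HB Require Import structures.
From mathcomp Require Import all_boot all_order all_algebra.
From mathcomp Require Import all_classical all_reals all_analysis.
From mathcomp Require Import complex.
From mathcomp Require Import Rstruct Rstruct_topology.
Set Implicit Arguments. Unset Strict Implicit. Unset Printing Implicit Defensive.
Import Order.TTheory GRing.Theory Num.Theory.
Local Open Scope classical_set_scope.
Local Open Scope ring_scope.

Notation RR := Rdefinitions.R.
Notation CC := (complex RR).

Definition cabs (z : CC) : RR := Normc.normc z.

Definition imat := nat -> nat -> CC.

Definition supported_in (n : nat) (A : imat) : Prop :=
  forall i j, (n <= i)%N \/ (n <= j)%N -> A i j = 0.

Definition finsupp (A : imat) : Prop := exists n, supported_in n A.

Definition msub (A B : imat) : imat := fun i j => A i j - B i j.

Definition rank_le (B : imat) (k : nat) : Prop :=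
  exists n, supported_in n B /\ (\rank (\matrix_(i < n, j < n) B i j) <= k)%N.

Definition opnorm (B : imat) : RR :=
  sup [set r : RR | exists (N : nat) (x : nat -> CC),
         \sum_(j < N) cabs (x j) ^+ 2 <= 1 /\
         r = Num.sqrt (\sum_(i < N) cabs (\sum_(j < N) B i j * x j) ^+ 2)].

(* k-th singular value (approximation number)
   mu(k,A) = inf { ||A - R||_inf : rank R <= k } *)
Definition sing (k : nat) (A : imat) : RR :=
  inf [set r : RR | exists B : imat, finsupp B /\ rank_le B k /\ r = opnorm (msub A B)].

Definition schatten (p : RR) (A : imat) : RR :=
  (sup [set s : RR | exists N : nat, s = \sum_(k < N) (sing k A) `^ p]) `^ (p^-1).

Definition schur (m : imat) (A : imat) : imat := fun j k => m j k * A j k.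

Definition bounded_fun (m : imat) : Prop :=
  exists M : RR, forall j k, cabs (m j k) <= M.

Definition schur_bounded (p : RR) (m : imat) : Prop :=
  exists Cm : RR, forall A : imat, finsupp A ->
    schatten p (schur m A) <= Cm * schatten p A.

Definition schur_bounded_pattern (p : RR) (S : set (nat * nat)) : Prop :=
  forall m : imat, bounded_fun m ->
    (forall j k, ~ S (j, k) -> m j k = 0) -> schur_bounded p m.

From Pilot Require Import Defs.
From mathcomp Require Import all_boot all_order all_algebra.
From mathcomp Require Import all_classical all_reals all_analysis.
From mathcomp Require Import complex Rstruct Rstruct_topology.
From mathcomp Require Import ring.
Set Implicit Arguments. Unset Strict Implicit. Unset Printing Implicit Defensive.
Import Order.TTheory GRing.Theory Num.Theory.
Local Open Scope classical_set_scope.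
Local Open Scope ring_scope.

(* If [S] lies in no set (F × ℕ) ∪ (ℕ × F) with F finite, one can pick points [(r a, c a)]
   of [S], [a : nat], with pairwise distinct rows and pairwise distinct columns.  The all-ones
   block on the rows [r 0, ..., r (n-1)] and columns [c 0, ..., c (n-1)] has rank one and
   operator norm [n], so its [C_p] quasi-norm is at most [n]; its Schur product with the
   indicator of the points is a partial permutation matrix, whose [n] nonzero singular values
   equal [1], so its [C_p] quasi-norm is [n^(1/p)].  A bounded multiplier would give
   [n^(1/p) <= C n] for every [n], which fails for [p < 1]. *)

Lemma cabs_ge0 (z : CC) : 0 <= cabs z.
Proof. by case: z => a b; rewrite /cabs /Normc.normc sqrtr_ge0. Qed.

Lemma cabs0 : cabs 0 = 0. Proof. exact: Normc.normc0. Qed.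

Lemma cabs1 : cabs 1 = 1. Proof. exact: Normc.normc1. Qed.

Lemma cabs_eq0 (z : CC) : cabs z = 0 -> z = 0. Proof. exact: Normc.eq0_normc. Qed.

Lemma cabsM (x y : CC) : cabs (x * y) = cabs x * cabs y. Proof. exact: Normc.normcM. Qed.

Lemma cabs_real (t : RR) : 0 <= t -> cabs (t%:C)%C = t.
Proof. by move=> t0; rewrite /cabs /Normc.normc /= expr0n /= addr0 sqrtr_sqr ger0_norm. Qed.

Lemma cabs_sum N (f : 'I_N -> CC) : cabs (\sum_(i < N) f i) <= \sum_(i < N) cabs (f i).
Proof.
elim/big_ind2: _ => [|x1 x2 y1 y2 h1 h2|//]; first by rewrite cabs0.
exact: le_trans (le_normcD _ _) (lerD h1 h2).
Qed.

Lemma CauchySchwarz_real N (u v : 'I_N -> RR) :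
  (\sum_(i < N) u i * v i) ^+ 2 <= (\sum_(i < N) u i ^+ 2) * (\sum_(i < N) v i ^+ 2).
Proof.
set U := \sum_(i < N) u i ^+ 2; set V := \sum_(i < N) v i ^+ 2.
set W := \sum_(i < N) u i * v i.
have U0 : 0 <= U by apply: sumr_ge0 => i _; exact: sqr_ge0.
have key : 0 <= \sum_(i < N) (u i * W - v i * U) ^+ 2.
  by apply: sumr_ge0 => i _; exact: sqr_ge0.
have lagrange : \sum_(i < N) (u i * W - v i * U) ^+ 2 = U * (U * V - W ^+ 2).
  rewrite (eq_bigr (fun i => W ^+ 2 * u i ^+ 2 - (2 * W * U) * (u i * v i) + U ^+ 2 * v i ^+ 2));
    last by move=> i _; ring.
  rewrite big_split /= sumrB -!mulr_sumr -/U -/V -/W; ring.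
rewrite lagrange in key.
have [U_eq0|U_neq0] := eqVneq U 0; last first.
  by rewrite -subr_ge0; rewrite pmulr_rge0 // in key; rewrite lt_def U_neq0 U0.
have u0 i : u i = 0.
  apply/eqP; rewrite -sqrf_eq0; apply/eqP.
  by apply: (psumr_eq0P _ U_eq0) => // j _; exact: sqr_ge0.
rewrite /W big1 ?expr0n ?mulr_ge0 //; last by move=> i _; rewrite u0 mul0r.
by apply: sumr_ge0 => i _; exact: sqr_ge0.
Qed.

Lemma CauchySchwarz_cabs N (a x : 'I_N -> CC) :
  cabs (\sum_(i < N) a i * x i) ^+ 2 <=
  (\sum_(i < N) cabs (a i) ^+ 2) * (\sum_(i < N) cabs (x i) ^+ 2).
Proof.
apply: le_trans (CauchySchwarz_real (fun i => cabs (a i)) (fun i => cabs (x i))).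
have tri : cabs (\sum_(i < N) a i * x i) <= \sum_(i < N) cabs (a i) * cabs (x i).
  apply: le_trans (cabs_sum (fun i => a i * x i)) _.
  by apply: ler_sum => i _; rewrite cabsM.
by rewrite !expr2; apply: ler_pM; rewrite ?cabs_ge0.
Qed.

Lemma sum_pick (V : pzRingType) N (F : nat -> V) (x : nat) :
  \sum_(j < N) F j * ((j : nat) == x)%:R = if (x < N)%N then F x else 0.
Proof.
case: ltnP => hx.
  rewrite (bigD1 (Ordinal hx)) //= eqxx mulr1 big1 ?addr0 // => j hj.
  have -> : ((j : nat) == x) = false.
    by apply/negbTE; apply: contra hj => /eqP E; apply/eqP; apply: val_inj.
  by rewrite mulr0.
rewrite big1 // => j _.
have -> : ((j : nat) == x) = false by apply/negbTE; rewrite neq_ltn (leq_trans (ltn_ord j) hx).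
by rewrite mulr0.
Qed.

Lemma sum_pick_inj (V : pzRingType) n (g : nat -> nat) (ginj : injective g)
    (F : 'I_n -> V) (j : nat) :
  \sum_(a < n) F a * (j == g a)%:R =
  if [pick a : 'I_n | g a == j] is Some a then F a else 0.
Proof.
case: pickP => [a0 /eqP ha0|hn].
  rewrite (bigD1 a0) //= ha0 eqxx mulr1 big1 ?addr0 // => a ha.
  have -> : (j == g a) = false.
    apply/negbTE; apply: contra ha; rewrite -ha0 => /eqP /ginj E; apply/eqP; exact: val_inj.
  by rewrite mulr0.
by rewrite big1 // => a _; have := hn a; rewrite eq_sym => ->; rewrite mulr0.
Qed.

Lemma sum_le_support N (f : nat -> RR) (s : seq nat) (c : RR) :
  (forall i, 0 <= f i <= c) -> (forall i, f i != 0 -> i \in s) ->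
  \sum_(i < N) f i <= (size s)%:R * c.
Proof.
move=> fb fs.
have c0 : 0 <= c by case/andP: (fb 0%N) => h1 h2; exact: le_trans h1 h2.
apply: (@le_trans _ _ (\sum_(i < N) \sum_(x <- s) c * ((i : nat) == x)%:R)).
  apply: ler_sum => i _.
  have [->|fi0] := eqVneq (f i) 0.
    by apply: sumr_ge0 => x _; rewrite mulr_ge0 ?ler0n.
  rewrite (big_rem (i : nat)) ?fs //= eqxx mulr1.
  case/andP: (fb i) => _ h; apply: le_trans h _; rewrite lerDl.
  by apply: sumr_ge0 => x _; rewrite mulr_ge0 ?ler0n.
rewrite exchange_big /= mulr_natl -iter_addr_0 -(count_predT s) -big_const_seq.
apply: ler_sum => x _; rewrite (@sum_pick _ _ (fun _ => c)).
by case: ifP.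
Qed.

Definition opset (B : imat) : set RR := [set r : RR | exists (N : nat) (x : nat -> CC),
  \sum_(j < N) cabs (x j) ^+ 2 <= 1 /\
  r = Num.sqrt (\sum_(i < N) cabs (\sum_(j < N) B i j * x j) ^+ 2)].

Definition opbound (B : imat) (K : RR) := forall N (x : nat -> CC),
  \sum_(j < N) cabs (x j) ^+ 2 <= 1 ->
  \sum_(i < N) cabs (\sum_(j < N) B i j * x j) ^+ 2 <= K ^+ 2.

Lemma opset0 B : opset B 0.
Proof. by exists 0%N, (fun _ => 0); rewrite !big_ord0 sqrtr0. Qed.

Lemma opnorm_le B K : 0 <= K -> opbound B K -> has_ubound (opset B) /\ opnorm B <= K.
Proof.
move=> K0 hb.
have ub : ubound (opset B) K.
  move=> r [N [x [hx ->]]].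
  by rewrite -(ger0_norm K0) -sqrtr_sqr ler_sqrt ?sqr_ge0 // hb.
by split; [exists K|apply: ge_sup => //; exists 0; exact: opset0].
Qed.

Lemma opnorm_ge B r : has_ubound (opset B) -> opset B r -> r <= opnorm B.
Proof. by move=> hu hr; apply: ub_le_sup. Qed.

Lemma opbound_supp B (rs cs : seq nat) (c : RR) :
  (forall i j, cabs (B i j) <= c) -> (forall i j, B i j != 0 -> i \in rs /\ j \in cs) ->
  opbound B (Num.sqrt ((size rs)%:R * ((size cs)%:R * c ^+ 2))).
Proof.
move=> hc hs N x hx.
have c0 : 0 <= c by apply: le_trans (hc 0%N 0%N); exact: cabs_ge0.
have sqr_sum_ge0 (f : 'I_N -> RR) : 0 <= \sum_(j < N) f j ^+ 2.
  by apply: sumr_ge0 => j _; exact: sqr_ge0.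
rewrite sqr_sqrtr ?mulr_ge0 ?sqr_ge0 ?ler0n //.
apply: (@sum_le_support _ (fun i => cabs (\sum_(j < N) B i j * x j) ^+ 2)) => [i|i].
  rewrite sqr_ge0 /=; apply: le_trans (CauchySchwarz_cabs _ _) _.
  rewrite -[X in _ <= X]mulr1; apply: ler_pM => //.
  apply: (@sum_le_support _ (fun j => cabs (B i j) ^+ 2)) => j.
    by rewrite sqr_ge0 /= ler_sqr ?nnegrE ?cabs_ge0.
  apply: contraR => hj.
  have -> : B i j = 0 by apply/eqP; apply: contraT => /hs [] _ hj'; rewrite hj' in hj.
  by rewrite cabs0 expr0n.
apply: contraR => hi; rewrite big1 ?cabs0 ?expr0n // => j _.
have -> : B i j = 0 by apply/eqP; apply: contraT => /hs [] hi' _; rewrite hi' in hi.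
by rewrite mul0r.
Qed.

Lemma finsupp_opset_ub B : finsupp B -> has_ubound (opset B).
Proof.
case=> M hM.
set c := \sum_(i < M) \sum_(j < M) cabs (B i j).
have c0 : 0 <= c by do 2 (apply: sumr_ge0 => ? _); exact: cabs_ge0.
have hc i j : cabs (B i j) <= c.
  case: (ltnP i M) => hi; last by rewrite hM ?cabs0 //; left.
  case: (ltnP j M) => hj; last by rewrite hM ?cabs0 //; right.
  rewrite /c (bigD1 (Ordinal hi)) //= (bigD1 (Ordinal hj)) //= -addrA lerDl.
  by rewrite addr_ge0 ?sumr_ge0 // => *; rewrite ?sumr_ge0 // => *; exact: cabs_ge0.
have hs i j : B i j != 0 -> i \in iota 0 M /\ j \in iota 0 M.
  move=> hB; rewrite !mem_iota /= !add0n; split.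
    by apply: contraR hB; rewrite -leqNgt => h; rewrite hM ?eqxx //; left.
  by apply: contraR hB; rewrite -leqNgt => h; rewrite hM ?eqxx //; right.
by case: (opnorm_le (sqrtr_ge0 _) (opbound_supp hc hs)).
Qed.

Lemma opnorm_ge0 B : finsupp B -> 0 <= opnorm B.
Proof. by move=> hB; apply: opnorm_ge (finsupp_opset_ub hB) (opset0 B). Qed.

Definition mzero : imat := fun _ _ => 0.

Lemma finsupp_mzero : finsupp mzero. Proof. by exists 0%N. Qed.

Lemma rank_le_mzero k : rank_le mzero k.
Proof. by exists 0%N; split; last exact: leq_trans (rank_leq_row _) _. Qed.

Lemma msubr0 A : msub A mzero = A.
Proof. by apply: funext => i; apply: funext => j; rewrite /msub /mzero subr0. Qed.

Lemma finsupp_msub A B : finsupp A -> finsupp B -> finsupp (msub A B).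
Proof.
move=> [n hA] [m hB]; exists (maxn n m) => i j h.
rewrite /msub hA ?hB ?subr0 //.
  by case: h => h; [left|right]; apply: leq_trans h; rewrite leq_maxr.
by case: h => h; [left|right]; apply: leq_trans h; rewrite leq_maxl.
Qed.

Lemma opnorm_msubrr A : opnorm (msub A A) <= 0.
Proof.
have hb : opbound (msub A A) 0.
  move=> N x _; rewrite expr0n /= big1 // => i _.
  by rewrite big1 ?cabs0 ?expr0n // => j _; rewrite /msub subrr mul0r.
by case: (opnorm_le (lexx 0) hb).
Qed.

Definition singset (k : nat) (A : imat) : set RR :=
  [set r : RR | exists B : imat, finsupp B /\ rank_le B k /\ r = opnorm (msub A B)].

Lemma singset_neq0 k A : singset k A !=set0.
Proof.
by exists (opnorm (msub A mzero)), mzero; split; [exact: finsupp_mzero|split; [exact: rank_le_mzero|]].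
Qed.

Lemma sing_ge0 k A : finsupp A -> 0 <= sing k A.
Proof.
move=> hA; apply: lb_le_inf; first exact: singset_neq0.
by move=> r [B [hB [_ ->]]]; apply/opnorm_ge0/finsupp_msub.
Qed.

Lemma sing_le k A B : finsupp A -> finsupp B -> rank_le B k -> sing k A <= opnorm (msub A B).
Proof.
move=> hA hB hr; apply: ge_inf; last by exists B.
by exists 0 => r [B' [hB' [_ ->]]]; apply/opnorm_ge0/finsupp_msub.
Qed.

Lemma sing_ge k A r :
  (forall B, finsupp B -> rank_le B k -> r <= opnorm (msub A B)) -> r <= sing k A.
Proof.
move=> h; apply: lb_le_inf; first exact: singset_neq0.
by move=> y [B [hB [hr ->]]]; exact: h.
Qed.

Lemma sing_le_opnorm k A : finsupp A -> sing k A <= opnorm A.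
Proof.
move=> hA; rewrite -{2}(msubr0 A).
by apply: sing_le => //; [exact: finsupp_mzero|exact: rank_le_mzero].
Qed.

Lemma sing_rank_eq0 k A : finsupp A -> rank_le A k -> sing k A = 0.
Proof.
move=> hA hr; apply/eqP; rewrite eq_le sing_ge0 // andbT.
exact: le_trans (sing_le hA hA hr) (opnorm_msubrr A).
Qed.

Lemma powR_le2 (r x y : RR) : 0 <= r -> 0 <= x -> x <= y -> x `^ r <= y `^ r.
Proof. by move=> r0 x0 xy; apply: ge0_ler_powR; rewrite ?nnegrE // (le_trans x0 xy). Qed.

Definition psum (p : RR) (A : imat) : set RR :=
  [set s : RR | exists N : nat, s = \sum_(k < N) (sing k A) `^ p].

Lemma psum0 p A : psum p A 0. Proof. by exists 0%N; rewrite big_ord0. Qed.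

Lemma schatten_rank1_le p A : 0 < p -> finsupp A -> rank_le A 1 -> schatten p A <= opnorm A.
Proof.
move=> p0 hA hr; have p0' := ltW p0; set K := opnorm A.
have K0 : 0 <= K := opnorm_ge0 hA.
have sing_eq0 k : (0 < k)%N -> sing k A = 0.
  move=> k0; apply: sing_rank_eq0 => //.
  by case: hr => M [hM hM1]; exists M; split; last exact: leq_trans hM1 k0.
have ub : ubound (psum p A) (K `^ p).
  move=> s [N ->]; rewrite -[X in _ <= X]mul1r -[1]/((size [:: 0%N])%:R).
  apply: (@sum_le_support _ (fun k => sing k A `^ p)) => -[|k] //=.
  - by rewrite powR_ge0 powR_le2 ?p0' ?sing_ge0 ?sing_le_opnorm.
  - by rewrite sing_eq0 // (powR0 (lt0r_neq0 p0)) lexx powR_ge0.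
  - by rewrite sing_eq0 // (powR0 (lt0r_neq0 p0)) eqxx.
have sK : sup (psum p A) <= K `^ p by apply: ge_sup => //; exists 0; exact: psum0.
have s0 : 0 <= sup (psum p A) by apply: ub_le_sup; [exists (K `^ p)|exact: psum0].
apply: le_trans (powR_le2 _ s0 sK) _; first by rewrite invr_ge0 ltW.
by rewrite -powRrM mulfV ?gt_eqF // powRr1.
Qed.

Lemma schatten_ge p A n : 0 < p -> finsupp A -> (forall k, (k < n)%N -> 1 <= sing k A) ->
  n%:R `^ (p^-1) <= schatten p A.
Proof.
move=> p0 hA h1; have p0' := ltW p0; have [M hM] := hA.
have ub : ubound (psum p A) ((size (iota 0 M))%:R * opnorm A `^ p).
  move=> s [N ->]; apply: (@sum_le_support _ (fun k => sing k A `^ p)) => k.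
    by rewrite powR_ge0 powR_le2 ?p0' ?sing_ge0 ?sing_le_opnorm.
  apply: contraR; rewrite mem_iota add0n /= -leqNgt => hk.
  rewrite sing_rank_eq0 ?(powR0 (lt0r_neq0 p0)) ?eqxx //.
  by exists M; split; last exact: leq_trans (rank_leq_row _) hk.
have sn : n%:R <= sup (psum p A).
  apply: (@le_trans _ _ (\sum_(k < n) sing k A `^ p)); last first.
    by apply: ub_le_sup; [exists ((size (iota 0 M))%:R * opnorm A `^ p)|exists n].
  have -> : n%:R = \sum_(k < n) 1 `^ p by rewrite powR1 sumr_const card_ord.
  by apply: ler_sum => k _; rewrite powR_le2 ?p0' ?sing_ge0 ?h1.
by apply: powR_le2 => //; rewrite invr_ge0 ltW.
Qed.

Section Spread.
Variables (n : nat) (g : nat -> nat) (ginj : injective g) (w : 'I_n -> CC) (N : nat)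
  (gN : forall a : 'I_n, (g a < N)%N).

Definition spread (j : nat) : CC := \sum_(a < n) w a * (j == g a)%:R.

Lemma spread_norm : \sum_(j < N) cabs (spread j) ^+ 2 = \sum_(a < n) cabs (w a) ^+ 2.
Proof.
have E (j : nat) : cabs (spread j) ^+ 2 = \sum_(a < n) cabs (w a) ^+ 2 * (j == g a)%:R.
  rewrite /spread !(sum_pick_inj ginj).
  by case: pickP => [a _|_] //; rewrite cabs0 expr0n.
under eq_bigr => j _ do rewrite E.
rewrite exchange_big /=; apply: eq_bigr => a _.
by have := @sum_pick _ N (fun j => cabs (w a) ^+ 2) (g a); rewrite gN.
Qed.

Lemma spread_dot (F : nat -> CC) : \sum_(j < N) F j * spread j = \sum_(a < n) w a * F (g a).
Proof.
rewrite /spread; under eq_bigr => j _ do rewrite mulr_sumr.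
rewrite exchange_big /=; apply: eq_bigr => a _.
have := @sum_pick _ N (fun j => w a * F j) (g a); rewrite gN => <-.
by apply: eq_bigr => j _; rewrite mulrCA mulrA.
Qed.

End Spread.

Lemma rank_le_cols_dependent n k (B : imat) M (g : nat -> nat) : supported_in M B ->
  (\rank (\matrix_(i < M, j < M) B i j) <= k)%N -> (k < n)%N ->
  exists2 v : 'I_n -> CC, exists a, v a != 0 &
    forall i : nat, \sum_(a < n) v a * B i (g a) = 0.
Proof.
move=> hM hr hkn.
set E : 'M[CC]_(M, n) := \matrix_(j, a) ((j : nat) == g a)%:R.
set K := \matrix_(i < M, j < M) B i j *m E.
have KE (i : 'I_M) (a : 'I_n) : K i a = B i (g a).
  rewrite /K mxE; under eq_bigr => j _ do rewrite !mxE.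
  rewrite (@sum_pick _ M (fun j => B i j)); case: ltnP => // h.
  by rewrite hM //; right.
have : kermx K^T != 0.
  rewrite -mxrank_eq0 mxrank_ker mxrank_tr subn_eq0 -ltnNge.
  exact: leq_ltn_trans (leq_trans (mxrankM_maxl _ _) hr) hkn.
case/matrix0Pn => a0 [b0 hab].
exists (fun a => kermx K^T a0 a); first by exists b0.
move=> i; case: (ltnP i M) => hi; last by rewrite big1 // => a _; rewrite hM ?mulr0 //; left.
have /matrixP/(_ a0 (Ordinal hi)) := mulmx_ker K^T; rewrite !mxE => ker0.
by apply: etrans ker0; apply: eq_bigr => a _; rewrite [K^T _ _]mxE KE.
Qed.

Section Construction.
Variables (r c : nat -> nat) (rinj : injective r) (cinj : injective c).

Definition graph_ind : imat := fun i j => if `[< exists a, r a = i /\ c a = j >] then 1 else 0.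

Lemma graph_ind_bounded : Defs.bounded_fun graph_ind.
Proof. by exists 1 => i j; rewrite /graph_ind; case: asboolP; rewrite ?cabs1 ?cabs0. Qed.

Variable n : nat.

Definition ones_block : imat := fun i j =>
  if (i \in map r (iota 0 n)) && (j \in map c (iota 0 n)) then 1 else 0.

Definition perm_block : imat := fun i j =>
  if has (fun a => (r a == i) && (c a == j)) (iota 0 n) then 1 else 0.

Definition block_size : nat := \max_(a < n) (maxn (r a) (c a)).+1.

Lemma lt_block_size a : (a < n)%N -> (r a < block_size)%N /\ (c a < block_size)%N.
Proof.
move=> ha; have := @leq_bigmax _ (fun a : 'I_n => (maxn (r a) (c a)).+1) (Ordinal ha).
by rewrite /block_size /= => h; split; apply: leq_trans h; rewrite ltnS ?leq_maxl ?leq_maxr.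
Qed.

Lemma ones_block_supported : supported_in block_size ones_block.
Proof.
move=> i j h; rewrite /ones_block.
case: ifP => // /andP [/mapP [a ha Ei] /mapP [b hb Ej]]; subst i j.
move: ha hb; rewrite !mem_iota !add0n /= => ha hb.
have [h1 _] := lt_block_size ha; have [_ h2] := lt_block_size hb.
by case: h => h; [move: (leq_trans h1 h)|move: (leq_trans h2 h)]; rewrite ltnn.
Qed.

Lemma perm_block_supported : supported_in block_size perm_block.
Proof.
move=> i j h; rewrite /perm_block.
case: ifP => // /hasP [a ha /andP [/eqP Ei /eqP Ej]]; subst i j.
move: ha; rewrite mem_iota add0n /= => /lt_block_size [h1 h2].
by case: h => h; [move: (leq_trans h1 h)|move: (leq_trans h2 h)]; rewrite ltnn.
Qed.

Lemma finsupp_ones_block : finsupp ones_block.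
Proof. by exists block_size; exact: ones_block_supported. Qed.

Lemma finsupp_perm_block : finsupp perm_block.
Proof. by exists block_size; exact: perm_block_supported. Qed.

Lemma opnorm_ones_block : opnorm ones_block <= n%:R.
Proof.
have hb := @opbound_supp ones_block (map r (iota 0 n)) (map c (iota 0 n)) 1.
move: hb; rewrite !size_map size_iota expr1n mulr1 -expr2 sqrtr_sqr ger0_norm ?ler0n //.
move=> hb; case: (opnorm_le (ler0n _ _) (hb _ _)) => // i j.
  by rewrite /ones_block; case: ifP; rewrite ?cabs1 ?cabs0.
by rewrite /ones_block; case: ifP => [/andP [] //|]; rewrite eqxx.
Qed.

Lemma rank_le_ones_block : rank_le ones_block 1.
Proof.
exists block_size; split; first exact: ones_block_supported.
set u : 'M[CC]_(block_size, 1) :=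
  \matrix_(i, t) (if (i : nat) \in map r (iota 0 n) then 1 else 0).
set v : 'M[CC]_(1, block_size) :=
  \matrix_(t, j) (if (j : nat) \in map c (iota 0 n) then 1 else 0).
have -> : \matrix_(i < block_size, j < block_size) ones_block i j = u *m v.
  apply/matrixP => i j; rewrite !mxE big_ord1 !mxE /ones_block.
  by case: (_ \in _); case: (_ \in _); rewrite /= ?mulr1 ?mulr0 ?mul0r.
exact: leq_trans (mxrankM_maxl _ _) (rank_leq_col _).
Qed.

Lemma schur_graph_ind_ones_block : schur graph_ind ones_block = perm_block.
Proof.
apply: funext => i; apply: funext => j; rewrite /schur /graph_ind /ones_block /perm_block.
case: hasP => [[a ha /andP [/eqP Ei /eqP Ej]]|hn].
  have -> : `[< exists b, r b = i /\ c b = j >] = true by apply/asboolP; exists a.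
  by rewrite -Ei -Ej !map_f // mulr1.
case: asboolP => [[a [Ei Ej]]|_]; last by rewrite mul0r.
case: ifP => [/andP [/mapP [a' ha' Ea] _]|_]; last by rewrite mulr0.
have Eaa : a = a' by apply: rinj; rewrite Ei.
by exfalso; apply: hn; exists a'; rewrite // -Eaa Ei Ej !eqxx.
Qed.

Lemma perm_block_col i a : (a < n)%N -> perm_block i (c a) = (i == r a)%:R.
Proof.
move=> ha; rewrite /perm_block.
have [->|hne] := eqVneq i (r a).
  by rewrite (introT hasP) //; exists a; rewrite ?mem_iota ?add0n //= !eqxx.
case: hasP => // -[b _ /andP [/eqP E1 /eqP /cinj E2]].
by move: hne; rewrite -E1 E2 eqxx.
Qed.

(* A rank-[k] approximant [B] kills a nonzero combination [w] of its [n > k] columns [c a];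
   on the unit vector [spread c w] the matrix [perm_block - B] thus acts as [perm_block],
   which maps it to the unit vector [spread r w]. *)
Lemma sing_perm_block_ge1 k : (k < n)%N -> 1 <= sing k perm_block.
Proof.
move=> hkn; apply: sing_ge => B hB [M [hM hr]].
have [v [b0 hb0] hv] := rank_le_cols_dependent c hM hr hkn.
set s := \sum_(a < n) cabs (v a) ^+ 2.
have s0 : 0 < s.
  rewrite lt_def sumr_ge0 ?andbT => [|a _]; last exact: sqr_ge0.
  apply: contra hb0 => /eqP s_eq0; apply/eqP/cabs_eq0/eqP.
  by rewrite -sqrf_eq0; apply/eqP/(psumr_eq0P _ s_eq0) => // a _; exact: sqr_ge0.
set t : CC := ((Num.sqrt s)^-1)%:C%C.
have ht : cabs t = (Num.sqrt s)^-1 by rewrite cabs_real // invr_ge0 sqrtr_ge0.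
set w := fun a : 'I_n => v a * t.
have w_unit : \sum_(a < n) cabs (w a) ^+ 2 = 1.
  under eq_bigr => a _ do rewrite /w cabsM ht exprMn.
  by rewrite -mulr_suml -/s exprVn sqr_sqrtr ?ltW // mulfV // gt_eqF.
set Nb := maxn block_size M.
have rN (a : 'I_n) : (r a < Nb)%N.
  by apply: leq_trans (leq_maxl _ _); case: (lt_block_size (ltn_ord a)).
have cN (a : 'I_n) : (c a < Nb)%N.
  by apply: leq_trans (leq_maxl _ _); case: (lt_block_size (ltn_ord a)).
have hfs : finsupp (msub perm_block B) by apply: finsupp_msub => //; exact: finsupp_perm_block.
apply: opnorm_ge (finsupp_opset_ub hfs) _.
exists Nb, (spread c w); split; first by rewrite (spread_norm cinj w cN) w_unit.
have row (i : nat) : \sum_(j < Nb) msub perm_block B i j * spread c w j = spread r w i.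
  rewrite (spread_dot w cN (fun j => msub perm_block B i j)) /msub /spread.
  under eq_bigr => a _ do rewrite mulrBr.
  rewrite sumrB.
  have -> : \sum_(a < n) w a * B i (c a) = 0.
    by rewrite /w; under eq_bigr => a _ do rewrite mulrAC; rewrite -mulr_suml hv mul0r.
  by rewrite subr0; apply: eq_bigr => a _; rewrite perm_block_col.
under eq_bigr => i _ do rewrite row.
by rewrite (spread_norm rinj w rN) w_unit sqrtr1.
Qed.

Lemma schatten_ones_block_le p : 0 < p -> schatten p ones_block <= n%:R.
Proof.
move=> p0; apply: le_trans opnorm_ones_block.
exact: schatten_rank1_le p0 finsupp_ones_block rank_le_ones_block.
Qed.

Lemma schatten_perm_block_ge p : 0 < p -> n%:R `^ (p^-1) <= schatten p perm_block.
Proof. by move=> p0; apply: (schatten_ge p0 finsupp_perm_block); exact: sing_perm_block_ge1. Qed.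

End Construction.

(* When [g F] is a point whose coordinates avoid [F], the points [g (avoiding_points g a)]
   have pairwise distinct rows and pairwise distinct columns. *)
Fixpoint avoiding_points (g : seq nat -> nat * nat) (m : nat) : seq nat :=
  if m is m'.+1 then (g (avoiding_points g m')).1 :: (g (avoiding_points g m')).2
                       :: avoiding_points g m'
  else [::].

Lemma avoiding_points_mem g a b : (a < b)%N ->
  (g (avoiding_points g a)).1 \in avoiding_points g b /\
  (g (avoiding_points g a)).2 \in avoiding_points g b.
Proof.
elim: b => [//|b IH]; rewrite ltnS leq_eqVlt => /orP [/eqP ->|hab].
  by rewrite /= !inE !eqxx orbT.
by case: (IH hab) => h1 h2; rewrite /= !inE h1 h2 !orbT.
Qed.

Lemma avoiding_points_inj g (pr : nat * nat -> nat) : pr = fst \/ pr = snd ->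
  (forall F, pr (g F) \notin F) -> injective (fun a => pr (g (avoiding_points g a))).
Proof.
move=> hpr hg.
have mem a b : (a < b)%N -> pr (g (avoiding_points g a)) \in avoiding_points g b.
  by move=> hab; case: hpr => ->; case: (avoiding_points_mem g hab).
move=> a b /= E; case: (ltngtP a b) => // hab.
  by have := hg (avoiding_points g b); rewrite -E mem.
by have := hg (avoiding_points g a); rewrite E mem.
Qed.

Lemma uncovered_injective_points (S : set (nat * nat)) :
  (forall F : seq nat, exists q, [/\ S q, q.1 \notin F & q.2 \notin F]) ->
  exists r c : nat -> nat, [/\ injective r, injective c & forall a, S (r a, c a)].
Proof.
move=> hS; have [g hg] := choice hS.
exists (fun a => (g (avoiding_points g a)).1), (fun a => (g (avoiding_points g a)).2).
split; [apply: avoiding_points_inj; [left|by move=> F; case: (hg F)]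
       |apply: avoiding_points_inj; [right|by move=> F; case: (hg F)]|] => //.
by move=> a; rewrite -surjective_pairing; case: (hg (avoiding_points g a)).
Qed.

Lemma linear_lt_powR_inv (p C : RR) : 0 < p -> p < 1 -> 0 <= C ->
  exists n : nat, C * n%:R < n%:R `^ (p^-1).
Proof.
move=> p0 p1 C0.
set q := p^-1 - 1.
have q0 : 0 < q by rewrite /q subr_gt0 invf_gt1.
set K := C `^ q^-1.
exists (Num.truncn K).+1; set n := (Num.truncn K).+1.
have hK : K < n%:R by apply: real_truncnS_gt; exact: num_real.
have n0 : 0 < n%:R :> RR by rewrite ltr0n.
have -> : p^-1 = 1 + q by rewrite /q addrC subrK.
rewrite powRD; last by apply/implyP => _; rewrite gt_eqF.
rewrite powRr1 ?ler0n // [n%:R * _]mulrC ltr_pM2r //.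
have : K `^ q < n%:R `^ q by apply: gt0_ltr_powR; rewrite ?nnegrE ?powR_ge0 ?ltW.
by rewrite /K -powRrM mulVf ?gt_eqF // powRr1.
Qed.

Theorem mainTheorem3 (p : Rdefinitions.R) (hp0 : 0 < p) (hp1 : p < 1)
  (S : set (nat * nat)) :
  schur_bounded_pattern p S ->
  exists F : seq nat, forall j k, S (j, k) -> j \in F \/ k \in F.
Proof.
move=> hS; apply: contrapT => hnF.
have [r [c [rinj cinj rcS]]] : exists r c : nat -> nat,
    [/\ injective r, injective c & forall a, S (r a, c a)].
  apply: uncovered_injective_points => F; apply: contrapT => hF; apply: hnF.
  exists F => j k hjk; apply/orP/negPn/negP => /norP [hj hk].
  by apply: hF; exists (j, k).
have graph_in_S j k : ~ S (j, k) -> graph_ind r c j k = 0.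
  move=> hjk; rewrite /graph_ind; case: asboolP => // -[a [Ej Ek]].
  by case: hjk; rewrite -Ej -Ek.
have [Cm hCm] := hS _ (graph_ind_bounded r c) graph_in_S.
have [n hn] := linear_lt_powR_inv hp0 hp1 (normr_ge0 Cm).
set A := ones_block r c n.
have lower : n%:R `^ p^-1 <= schatten p (schur (graph_ind r c) A).
  by rewrite schur_graph_ind_ones_block //; exact: schatten_perm_block_ge.
have upper : Cm * schatten p A <= `|Cm| * n%:R.
  apply: le_trans (ler_wpM2r (powR_ge0 _ _) (ler_norm Cm)) _.
  by apply: ler_wpM2l; [exact: normr_ge0|exact: schatten_ones_block_le].
have := le_trans lower (le_trans (hCm _ (finsupp_ones_block r c n)) upper).
by rewrite leNgt hn.
Qed.
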